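(* Let $\mu\in(0,1)$ and $\beta(a)=\frac{\mu}{1+a}$. Let $W(\tau,b)=C(\tau)(1-b)^{\mu-1}(1+e^{\tau}b)^{-\mu}$ for $\tau\ge0$, $b\in[0,1)$, with $C(\tau)>0$ such that $\int_0^1W(\tau,b)db=1$, and $\delta(\tau)=\frac{C'(\tau)}{C(\tau)^2}-\frac{\mu}{C(\tau)}$. Then $$\delta(\tau)=-\frac{e^{-\tau}}{1+e^{-\tau}}.$$ *)

From HB Require Import structures.
From mathcomp Require Import all_boot all_order all_algebra.
From mathcomp Require Import all_classical all_reals all_analysis.
Set Implicit Arguments. Unset Strict Implicit. Unset Printing Implicit Defensive.
Import Order.TTheory GRing.Theory Num.Theory.
Import numFieldNormedType.Exports.
Local Open Scope classical_set_scope.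
Local Open Scope ring_scope.

Definition W (R : realType) (mu : R) (C : R -> R) (tau b : R) : R :=
  C tau * (1 - b) `^ (mu - 1) * (1 + expR tau * b) `^ (- mu).

Definition delta (R : realType) (mu : R) (C : R -> R) (dC tau : R) : R :=
  dC / (C tau ^+ 2) - mu / C tau.

From HB Require Import structures.
From mathcomp Require Import all_boot all_order all_algebra.
From mathcomp Require Import all_classical all_reals all_analysis.
From mathcomp Require Import measurable_realfun lebesgue_integral_under.
From mathcomp Require Import ring lra.
Import Order.TTheory GRing.Theory Num.Theory.
Import numFieldNormedType.Exports.
Local Open Scope classical_set_scope.
Local Open Scope ring_scope.

(* With Z(t) := int_0^1 (1-b)^(mu-1) (1 + e^t b)^(-mu) db the normalization
   says C = 1/Z, so C'/C^2 - mu/C = -(Z' + mu Z).  Differentiating under the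
   integral sign, the integrand of Z' + mu Z collapses to
   mu (1-b)^(mu-1) (1 + x b)^(-mu-1) with x = e^t, which has the explicit
   primitive -(1-b)^mu (1 + x b)^(-mu) / (1 + x) in b; hence
   Z' + mu Z = 1/(1 + e^t) = e^(-t)/(1 + e^(-t)). *)

Section real_calculus.
Context {R : realType}.

Lemma is_derive1_quotient {f : R -> R} {a l : R} : is_derive a 1 f l ->
  h^-1 * (f (a + h) - f a) @[h --> 0^'] --> l.
Proof.
case=> df <-; apply: cvg_trans df; apply: near_eq_cvg; apply: nearW => h.
by rewrite /= -[h%:A]/(h * 1) mulr1 (addrC h).
Qed.

Lemma cvg_quotient_halfline {f g : R -> R} {c a l : R} :
  (forall x, c <= x -> f x = g x) -> c <= a ->
  h^-1 * (f (a + h) - f a) @[h --> 0^'] --> l ->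
  h^-1 * (g (a + h) - g a) @[h --> 0^'+] --> l /\
  (c < a -> h^-1 * (g (a + h) - g a) @[h --> 0^'] --> l).
Proof.
move=> fg ca fl; split.
- apply: cvg_trans (cvg_dnbhs_at_right fl); apply: near_eq_cvg.
  apply: filterS (nbhs_right_gt 0) => h h0.
  by rewrite !fg // ?lerDr ?ler_wpDr // ltW.
- move=> {}ca; apply: cvg_trans fl; apply: near_eq_cvg.
  have : \forall h \near 0^', c - a < h.
    have h0 : h @[h --> 0^'] --> (0 : R) by apply: cvg_within_filter; exact: cvg_id.
    by apply: (cvgr_gt 0 h0); rewrite subr_lt0.
  by apply: filterS => h hca; rewrite !fg // ?ltW //; lra.
Qed.

Lemma derivable1_continuous {f : R -> R} {x : R} :
  derivable f x 1 -> {for x, continuous f}.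
Proof. by move=> d; apply/differentiable_continuous/derivable1_diffP. Qed.

Lemma powRN_le1 (y a : R) : 1 <= y -> 0 <= a -> y `^ (- a) <= 1.
Proof.
move=> y1 a0; rewrite powRN invf_le1.
- by rewrite -(powRr0 y); exact: ler_powR.
- by apply: powR_gt0; exact: lt_le_trans ltr01 y1.
Qed.

Lemma affine_ge1 {x b : R} : 0 <= x -> 0 <= b -> 1 <= 1 + x * b.
Proof. by move=> x0 b0; rewrite lerDl mulr_ge0. Qed.

Lemma powR_split (y a : R) : 0 < y -> y `^ a = y * y `^ (a - 1).
Proof.
move=> y0; rewrite -[X in X * _](powRr1 (ltW y0)) -powRD; first by rewrite addrC subrK.
by apply/implyP => _; rewrite gt_eqF.
Qed.

Lemma is_derive_powR_1B (a b : R) : b < 1 ->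
  is_derive b 1 (fun c : R => (1 - c) `^ a) (a * (1 - b) `^ (a - 1) * -1).
Proof.
move=> b1; have pos : 0 < 1 - b by rewrite subr_gt0.
have lin : is_derive b 1 (fun c : R => 1 - c) (-1).
  rewrite (_ : (fun c => _) = cst 1 - id) //.
  apply: is_derive_eq (is_deriveB (is_derive_cst (1 : R) b 1) (is_derive_id b 1)) _.
  by rewrite sub0r.
exact: (@is_derive1_comp _ (@powR R ^~ a) _ b _ _ (is_derive1_powR a pos) lin).
Qed.

Lemma is_derive_powR_affine (x a b : R) : 0 < 1 + x * b ->
  is_derive b 1 (fun c : R => (1 + x * c) `^ a) (a * (1 + x * b) `^ (a - 1) * x).
Proof.
move=> pos.
have lin : is_derive b 1 (fun c : R => 1 + x * c) x.
  rewrite (_ : (fun c => _) = cst 1 + x \*: id) //.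
  apply: is_derive_eq
    (is_deriveD (is_derive_cst (1 : R) b 1) (is_deriveZ x (is_derive_id b 1))) _.
  by rewrite add0r; exact: mulr1.
exact: (@is_derive1_comp _ (@powR R ^~ a) _ b _ _ (is_derive1_powR a pos) lin).
Qed.

Lemma measurable_powR_affine (x a : R) :
  measurable_fun setT (fun b : R => (1 + x * b) `^ a).
Proof.
apply: (measurableT_comp (measurable_powR _)).
by apply: measurable_funD => //; exact: measurable_funM.
Qed.

End real_calculus.

Section partition_function.
Context {R : realType}.
Variable mu : R.
Hypothesis mu_gt0 : 0 < mu.
Hypothesis mu_lt1 : mu < 1.

Local Notation lam := (@lebesgue_measure R).
Local Notation I01 := (`[0%R, 1%R[%classic : set R).

Definition beta_weight (b : R) := (1 - b) `^ (mu - 1).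

Definition Wu (t b : R) := beta_weight b * (1 + expR t * b) `^ (- mu).

Definition dWu (t b : R) :=
  - (mu * expR t * b * beta_weight b * (1 + expR t * b) `^ (- mu - 1)).

Definition Z (t : R) := \int[lam]_(b in I01) Wu t b.

Definition dens (x b : R) := mu * beta_weight b * (1 + x * b) `^ (- mu - 1).

Definition dens_prim (x b : R) :=
  - ((1 - b) `^ mu * (1 + x * b) `^ (- mu)) / (1 + x).

Lemma I01P {b : R} : I01 b -> 0 <= b /\ b < 1.
Proof. by rewrite /= in_itv /= => /andP[]. Qed.

Lemma measurable_beta_weight : measurable_fun setT beta_weight.
Proof.
apply: (measurableT_comp (measurable_powR _)).
exact: measurable_funB.
Qed.


Lemma measurable_Wu t : measurable_fun setT (Wu t).
Proof.
apply: measurable_funM; [exact: measurable_beta_weight|exact: measurable_powR_affine].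
Qed.

Lemma measurable_dens x : measurable_fun setT (dens x).
Proof.
apply: measurable_funM; last exact: measurable_powR_affine.
by apply: measurable_funM; [|exact: measurable_beta_weight].
Qed.

Lemma measurable_dWu t : measurable_fun setT (dWu t).
Proof.
apply: measurableT_comp => //; apply: measurable_funM; last exact: measurable_powR_affine.
by apply: measurable_funM; [apply: measurable_funM|exact: measurable_beta_weight].
Qed.

Lemma beta_weight_ge0 b : 0 <= beta_weight b.
Proof. exact: powR_ge0. Qed.

Lemma Wu_bound t b : I01 b -> 0 <= Wu t b <= beta_weight b.
Proof.
move=> /I01P[b0 b1]; rewrite /Wu mulr_ge0 ?powR_ge0 ?beta_weight_ge0 //=.
by rewrite ler_piMr ?beta_weight_ge0 // powRN_le1 ?affine_ge1 ?expR_ge0 // ltW.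
Qed.

Lemma dWu_add_Wu t b : 0 <= b -> dWu t b + mu * Wu t b = dens (expR t) b.
Proof.
move=> b0; have pos : 0 < 1 + expR t * b.
  exact: lt_le_trans ltr01 (affine_ge1 (expR_ge0 t) b0).
by rewrite /dWu /Wu /dens (powR_split _ (- mu) pos); ring.
Qed.

Lemma dWu_bound t b : I01 b -> `|dWu t b| <= mu * expR t * beta_weight b.
Proof.
move=> /I01P[b0 b1]; rewrite /dWu normrN.
have w0 : 0 <= (1 + expR t * b) `^ (- mu - 1) by exact: powR_ge0.
have w1 : (1 + expR t * b) `^ (- mu - 1) <= 1.
  by rewrite -opprD powRN_le1 ?affine_ge1 ?expR_ge0 // addr_ge0 // ltW.
have k0 : 0 <= mu * expR t * beta_weight b.
  by rewrite !mulr_ge0 ?expR_ge0 ?beta_weight_ge0 // ltW.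
rewrite (_ : _ * _ = (mu * expR t * beta_weight b) *
                     (b * (1 + expR t * b) `^ (- mu - 1))); last by ring.
rewrite ger0_norm; last exact: mulr_ge0 k0 (mulr_ge0 b0 w0).
by rewrite ler_piMr // mulr_ile1 // ltW.
Qed.

Lemma dens_bound x b : 0 <= x -> I01 b -> 0 <= dens x b <= mu * beta_weight b.
Proof.
move=> x0 /I01P[b0 b1]; rewrite /dens.
have w1 : (1 + x * b) `^ (- mu - 1) <= 1.
  by rewrite -opprD powRN_le1 ?affine_ge1 // addr_ge0 // ltW.
by rewrite !mulr_ge0 ?powR_ge0 ?beta_weight_ge0 ?ler_piMr ?mulr_ge0
           ?beta_weight_ge0 // ltW.
Qed.

Lemma integral_Wu (C : R -> R) t : 0 < C t ->
  (\int[lam]_(b in I01) (W mu C t b)%:E)%E = 1%E ->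
  (\int[lam]_(b in I01) (Wu t b)%:E)%E = (C t)^-1%:E.
Proof.
move=> Ct0; rewrite /W.
under eq_integral do rewrite -mulrA EFinM.
rewrite ge0_integralZl_EFin //; last exact: ltW.
- move=> /(congr1 (fun x => (C t)^-1%:E * x)%E).
  by rewrite muleA -EFinM mulVf ?gt_eqF // mul1e mule1.
- by move=> b Bb; rewrite lee_fin; have /andP[] := Wu_bound t b Bb.
- by apply/measurable_EFinP; exact: measurable_funS (measurable_Wu t).
Qed.

Lemma integrable_le_scale (f g : R -> R) (k : R) : measurable_fun setT g ->
  lam.-integrable I01 (EFin \o f) -> (forall b, I01 b -> `|g b| <= k * f b) ->
  lam.-integrable I01 (EFin \o g).
Proof.
move=> mg intf gf.
apply: (le_integrable _ _ _ (integrableZl _ k intf)) => //.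
- by apply/measurable_EFinP; exact: measurable_funS mg.
- move=> b Bb /=; rewrite lee_fin.
  exact: le_trans (gf b Bb) (ler_norm _).
Qed.

Lemma integrable_beta_weight (c : R) :
  (\int[lam]_(b in I01) (Wu 0 b)%:E)%E = c%:E ->
  lam.-integrable I01 (EFin \o beta_weight).
Proof.
move=> Wu0c.
have iWu0 : lam.-integrable I01 (EFin \o Wu 0).
  apply/integrableP; split.
    by apply/measurable_EFinP; exact: measurable_funS (measurable_Wu 0).
  suff -> : (\int[lam]_(b in I01) `|(EFin \o Wu 0) b|)%E =
             (\int[lam]_(b in I01) (Wu 0 b)%:E)%E by rewrite Wu0c ltry.
  apply: eq_integral => b /[!inE] Bb /=; rewrite ger0_norm //.
  by have /andP[] := Wu_bound 0 b Bb.
apply: (integrable_le_scale _ _ 2 measurable_beta_weight iWu0) => b Bb.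
have [b0 b1] := I01P Bb.
rewrite /Wu expR0 mul1r powRN ger0_norm ?beta_weight_ge0 //.
have p1 : 1 <= (1 + b) `^ mu.
  by rewrite -[X in X <= _](powRr0 (1 + b)); apply: ler_powR; [rewrite lerDl|exact: ltW].
have p2 : (1 + b) `^ mu <= 2.
  apply: le_trans (_ : (1 + b) `^ 1 <= 2).
    by apply: ler_powR; [rewrite lerDl|exact: ltW mu_lt1].
  by rewrite powRr1 ?addr_ge0 //; lra.
have := beta_weight_ge0 b.
(* [1 <= (1 + b)^mu <= 2], hence [beta_weight <= 2 * Wu 0] *)
set p := (1 + b) `^ mu in p1 p2 *.
have pV : p * p^-1 = 1 by rewrite mulfV // gt_eqF // (lt_le_trans ltr01 p1).
have pV0 : 0 <= p^-1 by rewrite invr_ge0 (le_trans ler01 p1).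
nra.
Qed.

Lemma is_derive_Wu (t b : R) : 0 <= b -> is_derive t 1 (Wu ^~ b) (dWu t b).
Proof.
move=> b0.
have pos : 0 < 1 + expR t * b by apply: lt_le_trans ltr01 (affine_ge1 (expR_ge0 t) b0).
have lin : is_derive t 1 (fun s => 1 + expR s * b) (expR t * b).
  rewrite (_ : (fun s => _) = cst 1 + expR * cst b) //.
  apply: is_derive_eq (is_deriveD (is_derive_cst (1 : R) t 1)
                     (is_deriveM (is_derive_expR t) (is_derive_cst b t 1))) _.
  by rewrite scaler0 !add0r /= mulrC.
have D := is_deriveZ (beta_weight b)
  (@is_derive1_comp _ (@powR R ^~ (- mu)) (fun s => 1 + expR s * b) t _ _
     (is_derive1_powR (- mu) pos) lin).
rewrite (_ : Wu ^~ b =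
  beta_weight b \*: ((@powR R)^~ (- mu) \o (fun s => 1 + expR s * b))) //.
by apply: is_derive_eq D _; rewrite /dWu /GRing.scale /=; ring.
Qed.

Lemma partial1of2_Wu (t b : R) : 0 <= b -> partial1of2 Wu t b = dWu t b.
Proof. by move=> b0; rewrite partial1of2E; case: (is_derive_Wu t b b0). Qed.

Hypothesis integrable_beta : lam.-integrable I01 (EFin \o beta_weight).

Lemma integrable_Wu (t : R) : lam.-integrable I01 (EFin \o Wu t).
Proof.
apply: (integrable_le_scale _ _ 1 (measurable_Wu t) integrable_beta) => b Bb.
by have /andP[Wu0 Wub] := Wu_bound t b Bb; rewrite mul1r ger0_norm.
Qed.

Lemma integrable_dWu (t : R) : lam.-integrable I01 (EFin \o dWu t).
Proof.
apply: (integrable_le_scale _ _ _ (measurable_dWu t) integrable_beta) => b Bb.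
exact: dWu_bound.
Qed.

Lemma is_derive_Z (tau : R) : is_derive tau 1 Z (\int[lam]_(b in I01) dWu tau b).
Proof.
have Itau : `]tau - 1, tau + 1[%classic tau.
  by rewrite /= in_itv /=; apply/andP; split; lra.
have intW x : `]tau - 1, tau + 1[%classic x -> lam.-integrable I01 (EFin \o Wu x).
  by move=> _; exact: integrable_Wu.
have derW x b : `]tau - 1, tau + 1[%classic x -> I01 b -> derivable (Wu ^~ b) x 1.
  by move=> _ /I01P[b0 _]; case: (is_derive_Wu x b b0).
pose G b := mu * expR (tau + 1) * beta_weight b.
have G0 b : 0 <= G b by rewrite !mulr_ge0 ?expR_ge0 ?beta_weight_ge0 // ltW.
have intG : lam.-integrable I01 (EFin \o G).
  apply: (integrable_le_scale _ _ (mu * expR (tau + 1)) _ integrable_beta).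
    by apply: measurable_funM => //; exact: measurable_beta_weight.
  by move=> b _; rewrite ger0_norm.
have Gub x b : `]tau - 1, tau + 1[%classic x -> I01 b -> `|partial1of2 Wu x b| <= G b.
  move=> /= /[!in_itv] /andP[_ x1] Bb; have [b0 _] := I01P Bb.
  rewrite partial1of2_Wu //; apply: le_trans (dWu_bound x b Bb) _.
  rewrite ler_wpM2r ?beta_weight_ge0 // ler_wpM2l ?ler_expR ?ltW //.
have mI : measurable I01 by exact: measurable_itv.
split.
  exact: (derivable_under_integral (mu := lam) mI Itau intW derW G0 intG Gub).
rewrite -derive1E.
rewrite (differentiation_under_integral (mu := lam) mI Itau intW derW G0 intG Gub).
by apply: eq_Rintegral => b /[!inE] /I01P[b0 _]; rewrite partial1of2_Wu.
Qed.

Lemma is_derive_dens_prim (x b : R) : 0 <= x -> 0 <= b -> b < 1 ->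
  is_derive b 1 (dens_prim x) (dens x b).
Proof.
move=> x0 b0 b1.
have px : 0 < 1 + x by rewrite ltr_wpDr.
have pos1 : 0 < 1 - b by rewrite subr_gt0.
have pos : 0 < 1 + x * b by apply: lt_le_trans ltr01 (affine_ge1 x0 b0).
have := is_deriveZ (- (1 + x)^-1)
  (is_deriveM (is_derive_powR_1B mu _ b1) (is_derive_powR_affine x (- mu) _ pos)).
rewrite (_ : dens_prim x = - (1 + x)^-1 \*: ((fun c => (1 - c) `^ mu) *
                              (fun c => (1 + x * c) `^ (- mu)))) => [D|]; last first.
  apply/funext => c; rewrite /dens_prim.
  change (- ((1 - c) `^ mu * (1 + x * c) `^ (- mu)) / (1 + x) =
          - (1 + x)^-1 * ((1 - c) `^ mu * (1 + x * c) `^ (- mu))).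
  by rewrite mulNr mulrC mulNr.
apply: is_derive_eq D _.
rewrite /GRing.scale /= (powR_split _ mu pos1) (powR_split _ (- mu) pos).
rewrite /dens /beta_weight.
by field; rewrite gt_eqF.
Qed.

Lemma integrable_dens x : 0 <= x -> lam.-integrable I01 (EFin \o dens x).
Proof.
move=> x0.
apply: (integrable_le_scale _ _ mu (measurable_dens x) integrable_beta) => b Bb.
by have /andP[d0 d1] := dens_bound x b x0 Bb; rewrite ger0_norm.
Qed.

Lemma parameterized_integral_dens x r : 0 <= x -> 0 < r -> r < 1 ->
  parameterized_integral lam 0 r (dens x) = dens_prim x r - dens_prim x 0.
Proof.
move=> x0 r0 r1.
have der b : 0 <= b -> b <= r -> is_derive b 1 (dens_prim x) (dens x b).
  by move=> b0 br; apply: is_derive_dens_prim; last exact: le_lt_trans br r1.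
rewrite /parameterized_integral /Rintegral.
rewrite (@continuous_FTC2 _ _ (dens_prim x) _ _ r0); first by rewrite -EFinB.
- apply: derivable_within_continuous => b /[!in_itv] /= /andP[b0 br].
  have pos : 0 < 1 + x * b by apply: lt_le_trans ltr01 (affine_ge1 x0 b0).
  rewrite (_ : dens x =
    (cst mu * beta_weight) * (fun c => (1 + x * c) `^ (- mu - 1))) //.
  apply: derivableM; last by case: (is_derive_powR_affine x (- mu - 1) _ pos).
  apply: derivableM; first exact: derivable_cst.
  by case: (is_derive_powR_1B (mu - 1) _ (le_lt_trans br r1)).
- split.
  + by move=> b /[!in_itv] /= /andP[b0 br]; case: (der b (ltW b0) (ltW br)).
  + apply: cvg_at_right_filter; apply: derivable1_continuous.
    by case: (der 0 (lexx 0) (ltW r0)).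
  + apply: cvg_at_left_filter; apply: derivable1_continuous.
    by case: (der r (ltW r0) (lexx r)).
- move=> b /[!in_itv] /= /andP[b0 br]; rewrite derive1E.
  by case: (der b (ltW b0) (ltW br)).
Qed.

Lemma dens_prim_cvg1 x : 0 <= x -> dens_prim x r @[r --> 1^'-] --> 0.
Proof.
move=> x0.
have oneB : (fun r : R => (1 - r) `^ mu) @ 1^'- --> 0.
  apply: (@decreasing_cvg_at_left_comp _ (fun r => 1 - r) (@powR R ^~ mu) (BLeft 0)).
  - by rewrite bnd_simp.
  - by move=> p q _ _ pq; lra.
  - by apply: cvg_at_left_filter; apply: cvgB; [exact: cvg_cst|exact: cvg_id].
  - by rewrite subrr; exact: powR_cvg0.
have affine : (fun r : R => (1 + x * r) `^ (- mu)) @ 1^'- --> (1 + x * 1) `^ (- mu).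
  have pos : 0 < 1 + x * 1 by apply: lt_le_trans ltr01 (affine_ge1 x0 ler01).
  have [D _] := is_derive_powR_affine x (- mu) _ pos.
  exact: cvg_at_left_filter (derivable1_continuous D).
have H := cvgM (cvgN (cvgM oneB affine)) (cvg_cst (1 + x)^-1).
rewrite mul0r oppr0 mul0r in H; exact: H.
Qed.

Lemma Rintegral_dens x : 0 <= x -> \int[lam]_(b in I01) dens x b = (1 + x)^-1.
Proof.
move=> x0.
have int01 : lam.-integrable `[0, 1] (EFin \o dens x).
  apply/integrableP; split.
    by apply/measurable_EFinP; exact: measurable_funS (measurable_dens x).
  rewrite -integral_itv_bndo_bndc.
    by move/integrableP: (integrable_dens x x0) => [].
  apply: measurableT_comp => //; apply/measurable_EFinP.
  exact: measurable_funS (measurable_dens x).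
have F1 : (fun r => dens_prim x r - dens_prim x 0) @ 1^'- -->
          parameterized_integral lam 0 1 (dens x).
  apply: cvg_trans (parameterized_integral_cvg_at_left ltr01 int01).
  apply: near_eq_cvg; apply: filterS2 (nbhs_left_gt ltr01) (nbhs_left_lt 1).
  by move=> r r0 r1; rewrite parameterized_integral_dens.
have F0 : (fun r => dens_prim x r - dens_prim x 0) @ 1^'- --> 0 - dens_prim x 0.
  by apply: cvgB; [exact: dens_prim_cvg1|exact: cvg_cst].
rewrite (Rintegral_itv_bndo_bndc (integrable_dens x x0)).
rewrite -[LHS]/(parameterized_integral lam 0 1 (dens x)).
rewrite (cvg_unique (@Rhausdorff R) F1 F0) /dens_prim subr0 mulr0 addr0 powR1 /=.
by field; rewrite gt_eqF // ltr_wpDr.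
Qed.

Lemma Rintegral_dWu_addZ t :
  \int[lam]_(b in I01) dWu t b + mu * Z t = (1 + expR t)^-1.
Proof.
have imWu : lam.-integrable I01 (EFin \o (fun b => mu * Wu t b)).
  apply: (integrable_le_scale _ _ mu _ (integrable_Wu t)) => [|b Bb].
    by apply: measurable_funM => //; exact: measurable_Wu.
  have /andP[W0 _] := Wu_bound t b Bb.
  by rewrite ger0_norm // mulr_ge0 // ltW.
rewrite -(Rintegral_dens _ (expR_ge0 t)) /Z -RintegralZl ?integrable_Wu //.
rewrite -RintegralD ?integrable_dWu //.
by apply: eq_Rintegral => b /[!inE] /I01P[b0 _]; exact: dWu_add_Wu.
Qed.

End partition_function.

Theorem lemma5 (R : realType) (mu : R) (hmu0 : 0 < mu) (hmu1 : mu < 1)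
  (C : R -> R)
  (hCpos : forall tau : R, 0 <= tau -> 0 < C tau)
  (hCnorm : forall tau : R, 0 <= tau ->
     (\int[lebesgue_measure]_(b in `[0%R, 1%R[) (W mu C tau b)%:E)%E = 1%E) :
  forall tau : R, 0 <= tau ->
    exists dC : R,
      (* C'(tau): right derivative, two-sided when tau > 0 *)
      ((fun h : R => h^-1 * (C (tau + h) - C tau)) @ 0^'+ --> dC) /\
      (0 < tau -> (fun h : R => h^-1 * (C (tau + h) - C tau)) @ 0^' --> dC) /\
      delta mu C dC tau = - (expR (- tau) / (1 + expR (- tau))).
Proof.
move=> tau tau0.
have normW t (t0 : 0 <= t) := integral_Wu _ hmu0 _ _ (hCpos t t0) (hCnorm t t0).
have ZC t : 0 <= t -> Z mu t = (C t)^-1 by move=> t0; rewrite /Z /Rintegral normW.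
have Z0 : Z mu tau != 0 by rewrite ZC // invr_eq0 gt_eqF // hCpos.
have intb := integrable_beta_weight _ hmu0 hmu1 _ (normW 0 (lexx 0)).
have ZVC t : 0 <= t -> (Z mu t)^-1 = C t by move=> t0; rewrite ZC ?invrK.
have [Cright Ctwo] := cvg_quotient_halfline ZVC tau0
  (is_derive1_quotient (is_deriveV Z0 (is_derive_Z _ hmu0 intb tau))).
eexists; split; [exact: Cright|split; [exact: Ctwo|]].
have := Rintegral_dWu_addZ _ hmu0 intb tau.
have e0 := expR_gt0 tau.
have eN : (expR tau)^-1 / (1 + (expR tau)^-1) = (1 + expR tau)^-1.
  by field; rewrite !gt_eqF // addr_gt0.
rewrite /delta -(invrK (C tau)) -ZC // expRN eN /GRing.scale /= => <-.
by field.
Qed.
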